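(* Let $f\in\mathcal A_+(1)$ satisfy $\|f\|_{L^1(\mathbb{R})}=1$, $\widehat f=f$, $f(0)=0$, and $r(f)\in[\tfrac14,\tfrac1{\sqrt2}]$. Then for every $x\in(0,r(f)]$, $$f_+(x)\le \frac12+\frac{\sin\!\big(2\pi(r(f)-\tfrac14)x\big)-\sin(2\pi r(f)x)}{\pi x}.$$
   Context: Fourier transform: $\widehat f(\xi)=\int_{\mathbb{R}} f(x)e^{-2\pi i x\xi}\,dx$. $r(f):=\inf\{r>0: f(x)\ge 0 \text{ for all } |x|\ge r\}$. $\mathcal A_+(1)$ is the set of $f:\mathbb{R}\to\mathbb{R}$ with $f,\widehat f\in L^1(\mathbb{R})$, $\widehat f$ real-valued, $f$ eventually nonnegative (i.e. $\ge0$ for all large $|x|$) with $\widehat f(0)\le0$, and $\widehat f$ eventually nonnegative with $f(0)\le0$. $f_+:=\max\{f,0\}$. *)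

From Stdlib Require Import Reals Lra.
Open Scope R_scope.

Definition has_integral_R (g : R -> R) (l : R) : Prop :=
  (forall a b : R, inhabited (Riemann_integrable g a b)) /\
  forall eps : R, 0 < eps -> exists M : R, forall (a b : R)
    (pr : Riemann_integrable g a b),
    a <= - M -> M <= b -> Rabs (RiemannInt pr - l) < eps.

Definition L1 (f : R -> R) : Prop :=
  (forall a b : R, inhabited (Riemann_integrable f a b)) /\
  exists l : R, has_integral_R (fun x => Rabs (f x)) l.

(* fh is the Fourier transform of f, and it is real-valued:
   fh(xi) = int f(x) e^{-2 pi i x xi} dx, i.e. real part int f(x) cos(2 pi x xi),
   imaginary part - int f(x) sin(2 pi x xi) = 0. *)
Definition is_fourier (f fh : R -> R) : Prop :=
  forall xi : R,
    has_integral_R (fun x => f x * cos (2 * PI * x * xi)) (fh xi) /\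
    has_integral_R (fun x => f x * sin (2 * PI * x * xi)) 0.

Definition eventually_nonneg (f : R -> R) : Prop :=
  exists R0 : R, forall x : R, R0 <= Rabs x -> 0 <= f x.

Definition A_plus1 (f fh : R -> R) : Prop :=
  L1 f /\ L1 fh /\ is_fourier f fh /\
  eventually_nonneg f /\ fh 0 <= 0 /\
  eventually_nonneg fh /\ f 0 <= 0.

Definition nonneg_beyond (f : R -> R) (r : R) : Prop :=
  forall x : R, r <= Rabs x -> 0 <= f x.

Definition is_r_of (f : R -> R) (r : R) : Prop :=
  (forall r' : R, 0 < r' -> nonneg_beyond f r' -> r <= r') /\
  (forall eps : R, 0 < eps ->
     exists r' : R, 0 < r' /\ nonneg_beyond f r' /\ r' < r + eps).

Definition pos_part (f : R -> R) (x : R) : R := Rmax (f x) 0.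

(* Write f(x) as the integral of f(y) cos(2 pi x y) and put c = cos(2 pi s x) with
   s = r - 1/4.  Since r x <= r^2 <= 1/2, cos(2 pi x y) decreases in |y| on [0, r]: it
   is >= c for |y| <= s and <= c for s <= |y| <= r.  Hence f(y) cos(2 pi x y) is at most
   max(f(y), c f(y)) wherever f(y) >= 0 (in particular for |y| > r) or |y| < s, and at
   most that plus c - cos(2 pi x y) on the annulus s < |y| < r, because f >= -1 there
   (|f| = |f^| <= ||f||_1 = 1).  As the integral of f is f^(0) = f(0) = 0 and that of |f|
   is 1, max(f, c f) integrates to (1 - c)/2; the annulus term integrates to
   c/2 + (sin(2 pi s x) - sin(2 pi r x))/(pi x), and for this s the c-terms cancel. *)

From Stdlib Require Import Reals Lra FunctionalExtensionality.
From Coquelicot Require Import Coquelicot.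
Open Scope R_scope.

Lemma has_integral_R_ext (g h : R -> R) (l : R) :
  (forall y, g y = h y) -> has_integral_R g l -> has_integral_R h l.
Proof.
  intros E Hg. replace h with g; [exact Hg|]. now apply functional_extensionality.
Qed.

Lemma has_integral_R_lincomb (g h : R -> R) (a b alpha beta : R) :
  has_integral_R g a -> has_integral_R h b ->
  has_integral_R (fun y => alpha * g y + beta * h y) (alpha * a + beta * b).
Proof.
  intros [Ig Cg] [Ih Ch]. split.
  - intros u v. destruct (Ig u v) as [pg]. destruct (Ih u v) as [ph]. constructor.
    apply Riemann_integrable_plus; apply Riemann_integrable_scal; assumption.
  - intros eps Heps.
    set (k := Rabs alpha + Rabs beta + 1).
    assert (Hk : 0 < k) by (unfold k; pose proof (Rabs_pos alpha); pose proof (Rabs_pos beta); lra).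
    destruct (Cg (eps / k)) as [Mg HMg]; [apply Rdiv_lt_0_compat; lra|].
    destruct (Ch (eps / k)) as [Mh HMh]; [apply Rdiv_lt_0_compat; lra|].
    exists (Rmax Mg Mh). intros u v pr Hu Hv.
    pose proof (Rmax_l Mg Mh). pose proof (Rmax_r Mg Mh).
    destruct (Ig u v) as [pg]. destruct (Ih u v) as [ph].
    specialize (HMg u v pg ltac:(lra) ltac:(lra)).
    specialize (HMh u v ph ltac:(lra) ltac:(lra)).
    rewrite (RiemannInt_plus _ _ _ _ (Riemann_integrable_scal _ _ _ alpha pg)
               (Riemann_integrable_scal _ _ _ beta ph) pr).
    rewrite (RiemannInt_scal _ _ _ _ pg), (RiemannInt_scal _ _ _ _ ph).
    replace (alpha * RiemannInt pg + beta * RiemannInt ph - (alpha * a + beta * b))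
      with (alpha * (RiemannInt pg - a) + beta * (RiemannInt ph - b)) by ring.
    eapply Rle_lt_trans; [apply Rabs_triang|]. rewrite !Rabs_mult.
    assert (Rabs alpha * Rabs (RiemannInt pg - a) <= Rabs alpha * (eps / k))
      by (apply Rmult_le_compat_l; [apply Rabs_pos | lra]).
    assert (Rabs beta * Rabs (RiemannInt ph - b) <= Rabs beta * (eps / k))
      by (apply Rmult_le_compat_l; [apply Rabs_pos | lra]).
    assert (E : (Rabs alpha + Rabs beta) * (eps / k) < eps).
    { assert (0 < eps / k) by (apply Rdiv_lt_0_compat; lra).
      assert (eps / k * k = eps) by (field; lra).
      unfold k in *. nra. }
    lra.
Qed.

Lemma RiemannInt_nonpos (D : R -> R) (a b : R) (pr : Riemann_integrable D a b) :
  a <= b -> (forall y, a < y < b -> D y <= 0) -> RiemannInt pr <= 0.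
Proof.
  intros Hab HD.
  pose proof (RiemannInt_P19 pr (Riemann_integrable_const 0 a b) Hab HD) as H.
  rewrite RiemannInt_const in H. lra.
Qed.

Lemma has_integral_R_le_RiemannInt (D : R -> R) (d a b : R)
  (pr : Riemann_integrable D a b) :
  a <= b -> has_integral_R D d -> (forall y, y < a \/ b < y -> D y <= 0) ->
  d <= RiemannInt pr.
Proof.
  intros Hab [ID CD] HD. apply Rle_plus_epsilon. intros eps Heps.
  destruct (CD eps Heps) as [M HM].
  set (N := Rmax M (Rmax (- a) b)).
  assert (M <= N /\ - N <= a /\ b <= N) as (HMN & HaN & HbN).
  { unfold N. pose proof (Rmax_l M (Rmax (- a) b)). pose proof (Rmax_r M (Rmax (- a) b)).
    pose proof (Rmax_l (- a) b). pose proof (Rmax_r (- a) b). lra. }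
  destruct (ID (- N) N) as [pN]. destruct (ID (- N) a) as [pl].
  destruct (ID (- N) b) as [plb]. destruct (ID b N) as [pr'].
  specialize (HM _ _ pN ltac:(lra) ltac:(lra)). apply Rabs_def2 in HM.
  rewrite <- (RiemannInt_P26 plb pr' pN), <- (RiemannInt_P26 pl pr plb) in HM.
  pose proof (RiemannInt_nonpos _ _ _ pl HaN ltac:(intros; apply HD; left; lra)).
  pose proof (RiemannInt_nonpos _ _ _ pr' HbN ltac:(intros; apply HD; right; lra)).
  lra.
Qed.

Lemma has_integral_R_nonpos (D : R -> R) (d : R) :
  has_integral_R D d -> (forall y, D y <= 0) -> d <= 0.
Proof.
  intros HD Hle.
  pose proof (has_integral_R_le_RiemannInt D d 0 0 (RiemannInt_P7 D 0)
    (Rle_refl 0) HD (fun y _ => Hle y)) as H.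
  now rewrite RiemannInt_P9 in H.
Qed.

Lemma RiemannInt_le_annulus (D K : R -> R) (s r : R)
  (pD : Riemann_integrable D (- r) r)
  (pK1 : Riemann_integrable K (- r) (- s)) (pK2 : Riemann_integrable K s r) :
  0 <= s <= r ->
  (forall y, Rabs y < s -> D y <= 0) ->
  (forall y, s < Rabs y < r -> D y <= K y) ->
  RiemannInt pD <= RiemannInt pK1 + RiemannInt pK2.
Proof.
  intros Hsr Hin Hann.
  assert (pD1 : Riemann_integrable D (- r) (- s)) by (apply (RiemannInt_P22 pD); lra).
  assert (pD' : Riemann_integrable D (- s) r) by (apply (RiemannInt_P23 pD); lra).
  assert (pD2 : Riemann_integrable D (- s) s) by (apply (RiemannInt_P22 pD'); lra).
  assert (pD3 : Riemann_integrable D s r) by (apply (RiemannInt_P23 pD'); lra).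
  rewrite <- (RiemannInt_P26 pD1 pD' pD), <- (RiemannInt_P26 pD2 pD3 pD').
  assert (RiemannInt pD1 <= RiemannInt pK1).
  { apply RiemannInt_P19; [lra|]. intros y Hy. apply Hann. rewrite Rabs_left; lra. }
  assert (RiemannInt pD2 <= 0).
  { apply RiemannInt_nonpos; [lra|]. intros y Hy. apply Hin. apply Rabs_def1; lra. }
  assert (RiemannInt pD3 <= RiemannInt pK2).
  { apply RiemannInt_P19; [lra|]. intros y Hy. apply Hann. rewrite Rabs_right; lra. }
  lra.
Qed.

Lemma has_integral_R_le_annulus (D K : R -> R) (d s r : R)
  (pK1 : Riemann_integrable K (- r) (- s)) (pK2 : Riemann_integrable K s r) :
  0 <= s <= r -> has_integral_R D d ->
  (forall y, r < Rabs y -> D y <= 0) ->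
  (forall y, Rabs y < s -> D y <= 0) ->
  (forall y, s < Rabs y < r -> D y <= K y) ->
  d <= RiemannInt pK1 + RiemannInt pK2.
Proof.
  intros Hsr HD Hout Hin Hann. destruct (proj1 HD (- r) r) as [pD].
  apply (Rle_trans _ (RiemannInt pD)).
  - apply has_integral_R_le_RiemannInt; [lra | exact HD |].
    intros y Hy. apply Hout. unfold Rabs. destruct (Rcase_abs y); lra.
  - exact (RiemannInt_le_annulus D K s r pD pK1 pK2 Hsr Hin Hann).
Qed.

Lemma is_fourier_integral (f fh : R -> R) :
  is_fourier f fh -> has_integral_R f (fh 0).
Proof.
  intros Hf. apply (has_integral_R_ext (fun t => f t * cos (2 * PI * t * 0))).
  - intro t. rewrite Rmult_0_r, cos_0. ring.
  - apply Hf.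
Qed.

Lemma is_fourier_ge_neg_L1 (f fh : R -> R) (n xi : R) :
  is_fourier f fh -> has_integral_R (fun t => Rabs (f t)) n -> - n <= fh xi.
Proof.
  intros Hf Hn.
  pose proof (has_integral_R_lincomb _ _ _ _ (-1) (-1) Hn (proj1 (Hf xi))) as H.
  apply has_integral_R_nonpos in H; [lra|].
  intro t. pose proof (COS_bound (2 * PI * t * xi)).
  unfold Rabs; destruct (Rcase_abs (f t)); nra.
Qed.

Lemma is_r_of_nonneg (f : R -> R) (r y : R) : is_r_of f r -> r < Rabs y -> 0 <= f y.
Proof.
  intros [_ Hinf] Hy.
  destruct (Hinf (Rabs y - r)) as (r' & _ & Hr' & Hlt); [lra|].
  apply Hr'. lra.
Qed.

(* For [c <= 1] this is [Rmax v (c * v)], the largest value of [v * k] for [k] in [[c, 1]]. *)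
Definition majorant (c v : R) : R := (1 + c) / 2 * v + (1 - c) / 2 * Rabs v.

Lemma mul_le_majorant_of_nonneg (c v k : R) : 0 <= v -> k <= 1 -> v * k <= majorant c v.
Proof. intros Hv Hk. unfold majorant. rewrite Rabs_right by lra. nra. Qed.

Lemma mul_le_majorant_of_ge (c v k : R) : c <= k <= 1 -> v * k <= majorant c v.
Proof. intros Hk. unfold majorant, Rabs. destruct (Rcase_abs v); nra. Qed.

Lemma mul_le_majorant_add (c v k : R) :
  -1 <= v -> k <= c <= 1 -> v * k <= majorant c v + (c - k).
Proof. intros Hv Hk. unfold majorant, Rabs. destruct (Rcase_abs v); nra. Qed.

Lemma cos_2PI_mul_antitone (t u x : R) :
  0 <= x -> Rabs t <= Rabs u -> Rabs u * x <= 1 / 2 ->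
  cos (2 * PI * u * x) <= cos (2 * PI * t * x).
Proof.
  intros Hx Htu Hu. pose proof PI_RGT_0. pose proof (Rabs_pos t).
  assert (Habs : forall z, cos (2 * PI * z * x) = cos (2 * PI * Rabs z * x)).
  { intro z. unfold Rabs. destruct (Rcase_abs z); [|reflexivity].
    rewrite <- cos_neg. f_equal. ring. }
  assert (Rabs t * x <= Rabs u * x) by (apply Rmult_le_compat_r; lra).
  assert (0 <= Rabs t * x) by (apply Rmult_le_pos; lra).
  rewrite (Habs t), (Habs u), !(Rmult_assoc (2 * PI)).
  apply cos_decr_1; nra.
Qed.

Lemma is_RInt_const_sub_cos (c x u v : R) : x <> 0 ->
  is_RInt (fun y => c - cos (2 * PI * y * x)) u v
    ((c * v - sin (2 * PI * v * x) / (2 * PI * x)) - (c * u - sin (2 * PI * u * x) / (2 * PI * x))).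
Proof.
  intros Hx. pose proof PI_RGT_0.
  apply (is_RInt_derive (fun y => c * y - sin (2 * PI * y * x) / (2 * PI * x))).
  - intros y _. auto_derive; [auto|]. field. lra.
  - intros y _. apply (ex_derive_continuous (fun y => c - cos (2 * PI * y * x))).
    auto_derive. auto.
Qed.

Lemma RiemannInt_const_sub_cos (c x u v : R)
  (pr : Riemann_integrable (fun y => c - cos (2 * PI * y * x)) u v) : x <> 0 ->
  RiemannInt pr =
    (c * v - sin (2 * PI * v * x) / (2 * PI * x)) - (c * u - sin (2 * PI * u * x) / (2 * PI * x)).
Proof.
  intros Hx. rewrite <- (RInt_Reals _ _ _ pr).
  exact (is_RInt_unique _ _ _ _ (is_RInt_const_sub_cos c x u v Hx)).
Qed.

Lemma Riemann_integrable_const_sub_cos (c x u v : R) :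
  Riemann_integrable (fun y => c - cos (2 * PI * y * x)) u v.
Proof.
  apply ex_RInt_Reals_0, (ex_RInt_continuous (V := R_CompleteNormedModule)). intros z _.
  apply (ex_derive_continuous (fun y => c - cos (2 * PI * y * x))). auto_derive. auto.
Qed.

Lemma RiemannInt_const_sub_cos_ge (c x u v : R)
  (pr : Riemann_integrable (fun y => c - cos (2 * PI * y * x)) u v) :
  u <= v -> (c - 1) * (v - u) <= RiemannInt pr.
Proof.
  intros Huv. refine (proj1 (RiemannInt_const_bound (u := c + 1) pr Huv _)).
  intros y _. pose proof (COS_bound (2 * PI * y * x)). lra.
Qed.

Lemma RiemannInt_annulus_const_sub_cos (c x s r : R)
  (pK1 : Riemann_integrable (fun y => c - cos (2 * PI * y * x)) (- r) (- s))
  (pK2 : Riemann_integrable (fun y => c - cos (2 * PI * y * x)) s r) :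
  x <> 0 ->
  RiemannInt pK1 + RiemannInt pK2 =
    2 * c * (r - s) + (sin (2 * PI * s * x) - sin (2 * PI * r * x)) / (PI * x).
Proof.
  intros Hx. pose proof PI_RGT_0.
  rewrite (RiemannInt_const_sub_cos _ _ _ _ pK1 Hx), (RiemannInt_const_sub_cos _ _ _ _ pK2 Hx).
  replace (2 * PI * - s * x) with (- (2 * PI * s * x)) by ring.
  replace (2 * PI * - r * x) with (- (2 * PI * r * x)) by ring.
  rewrite !sin_neg. field. lra.
Qed.

Lemma mul_le_half_of_le_inv_sqrt2 (x r : R) :
  0 <= x <= r -> r <= 1 / sqrt 2 -> r * x <= 1 / 2.
Proof.
  intros Hx Hr.
  assert (Hsqrt : sqrt 2 * sqrt 2 = 2) by (apply sqrt_sqrt; lra).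
  assert (Hq : 0 < sqrt 2) by (apply sqrt_lt_R0; lra).
  assert (1 / sqrt 2 * sqrt 2 = 1) by (field; lra).
  assert (r * sqrt 2 <= 1) by nra.
  nra.
Qed.

Lemma fourier_le_annulus_integral (f fh : R -> R) (r s x : R)
  (pK1 : Riemann_integrable (fun y => cos (2 * PI * s * x) - cos (2 * PI * y * x)) (- r) (- s))
  (pK2 : Riemann_integrable (fun y => cos (2 * PI * s * x) - cos (2 * PI * y * x)) s r) :
  is_fourier f fh -> has_integral_R f 0 -> has_integral_R (fun y => Rabs (f y)) 1 ->
  (forall y, -1 <= f y) -> (forall y, r < Rabs y -> 0 <= f y) ->
  0 <= s <= r -> 0 <= x -> r * x <= 1 / 2 ->
  fh x <= (1 - cos (2 * PI * s * x)) / 2 + RiemannInt pK1 + RiemannInt pK2.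
Proof.
  intros Hf Hint Habs Hge Hpos Hsr Hx Hrx.
  set (c := cos (2 * PI * s * x)) in *.
  assert (Hc : c <= 1) by apply COS_bound.
  assert (Hcos_in : forall y, Rabs y <= s -> c <= cos (2 * PI * y * x)).
  { intros y Hy. apply cos_2PI_mul_antitone; rewrite ?(Rabs_right s); nra. }
  assert (Hcos_out : forall y, s <= Rabs y <= r -> cos (2 * PI * y * x) <= c).
  { intros y Hy. apply cos_2PI_mul_antitone; rewrite ?(Rabs_right s); nra. }
  set (D := fun y => 1 * (f y * cos (2 * PI * y * x)) + -1 * majorant c (f y)).
  assert (HD : has_integral_R D (1 * fh x + -1 * ((1 + c) / 2 * 0 + (1 - c) / 2 * 1)))
    by exact (has_integral_R_lincomb _ _ _ _ 1 (-1) (proj1 (Hf x))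
                (has_integral_R_lincomb _ _ _ _ _ _ Hint Habs)).
  enough (1 * fh x + -1 * ((1 + c) / 2 * 0 + (1 - c) / 2 * 1) <= RiemannInt pK1 + RiemannInt pK2)
    by lra.
  apply (has_integral_R_le_annulus D _ _ s r pK1 pK2 Hsr HD); intros y Hy; unfold D.
  - pose proof (mul_le_majorant_of_nonneg c (f y) _ (Hpos y Hy) (proj2 (COS_bound (2 * PI * y * x)))).
    lra.
  - pose proof (mul_le_majorant_of_ge c (f y) _
                  (conj (Hcos_in y ltac:(lra)) (proj2 (COS_bound (2 * PI * y * x))))).
    lra.
  - pose proof (mul_le_majorant_add c (f y) _ (Hge y) (conj (Hcos_out y ltac:(lra)) Hc)).
    lra.
Qed.

Theorem lemma2 (f : R -> R) (r : R) :
  A_plus1 f f ->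
  has_integral_R (fun x => Rabs (f x)) 1 ->
  f 0 = 0 ->
  is_r_of f r ->
  1 / 4 <= r <= 1 / sqrt 2 ->
  forall x : R, 0 < x <= r ->
    pos_part f x <=
      1 / 2 + (sin (2 * PI * (r - 1 / 4) * x) - sin (2 * PI * r * x)) / (PI * x).
Proof.
  intros (_ & _ & Hf & _) Habs f0 Hr Hrb x Hx.
  set (s := r - 1 / 4).
  pose proof (Riemann_integrable_const_sub_cos (cos (2 * PI * s * x)) x (- r) (- s)) as pK1.
  pose proof (Riemann_integrable_const_sub_cos (cos (2 * PI * s * x)) x s r) as pK2.
  assert (Hint : has_integral_R f 0) by (rewrite <- f0; exact (is_fourier_integral f f Hf)).
  assert (Hbound := fourier_le_annulus_integral f f r s x pK1 pK2 Hf Hint Habs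
    (fun y => is_fourier_ge_neg_L1 f f 1 y Hf Habs) (fun y => is_r_of_nonneg f r y Hr)
    ltac:(unfold s; lra) ltac:(lra) (mul_le_half_of_le_inv_sqrt2 x r ltac:(lra) (proj2 Hrb))).
  pose proof (RiemannInt_const_sub_cos_ge _ x _ _ pK1 ltac:(unfold s; lra)).
  pose proof (RiemannInt_const_sub_cos_ge _ x _ _ pK2 ltac:(unfold s; lra)).
  pose proof (RiemannInt_annulus_const_sub_cos _ x s r pK1 pK2 ltac:(lra)).
  replace (- s - - r) with (1 / 4) in * by (unfold s; ring).
  replace (r - s) with (1 / 4) in * by (unfold s; ring).
  unfold pos_part. apply Rmax_lub; lra.
Qed.
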